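(* Let $G$, $P$, $w$ be as in the context, and let $s,t\in V$, $s\neq t$, be such that there is at least one directed path from $s$ to $t$ in $G$. Let $U_s^{\{t,\overline{o}\}}(\alpha)$ be the avoidance hitting cost in the evaporating network $G_\alpha$ (avoided set $B=\emptyset$). Then: (a) $\lim_{\alpha\to 0^+}U_s^{\{t,\overline{o}\}}(\alpha)=L_{st}$, the shortest-path distance from $s$ to $t$ in $G$; (b) if moreover $t$ is reachable from every node reachable from $s$, then at $\alpha=1$, $U_s^{\{t,\overline{o}\}}(1)$ equals the classical hitting cost $U_s^{t}$ of the random walk with transition matrix $P$ on $G$ from $s$ to $t$ (and $U_s^{\{t,\overline{o}\}}(\alpha)\to U_s^t$ as $\alpha\to1^-$); (c) if $0<\alpha_1<\alpha_2\le 1$, then $U_s^{\{t,\overline{o}\}}(\alpha_1)\le U_s^{\{t,\overline{o}\}}(\alpha_2)$.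
   Context: $G=(V,E)$ is a finite directed graph with $n$ nodes; each edge $e_{ij}\in E$ has a positive cost (weight) $w_{ij}$. $P$ is a row-stochastic $n\times n$ transition matrix with $P_{ij}>0$ if and only if $e_{ij}\in E$. $L_{st}$ denotes the minimum total cost of a directed path from $s$ to $t$. Evaporating network: for $\alpha\in(0,1]$, $G_\alpha$ is the Markov chain on $V\cup\{o\}$ ($o$ a new node) with $P_{ij}(\alpha)=P_{ij}\alpha^{w_{ij}}$ for $i,j\in V$, $P_{io}(\alpha)=1-\sum_{j}P_{ij}\alpha^{w_{ij}}$ for $i\in V$, $P_{oo}(\alpha)=1$, $P_{oj}(\alpha)=0$ for $j\neq o$. Avoidance metrics: for a target $t\in V$ and an avoided set $B\subseteq V\setminus\{t\}$, make $t$, $o$ and all nodes of $B$ absorbing in $G_\alpha$; let $\mathcal T=V\setminus(\{t\}\cup B)$. Let $Q_x=Q_x^{\{t,\overline{B\cup\{o\}}\}}(\alpha)$ be the probability that the chain started at $x$ is absorbed at $t$ (so $Q_t=1$, $Q_o=0$, $Q_b=0$ for $b\in B$). Let $F^{\{t\}\cup B\cup\{o\}}(\alpha)=(I-P(\alpha)_{\mathcal T\mathcal T})^{-1}$. For $s,m\in\mathcal T$ with $Q_s>0$, the avoidance fundamental matrix is $F_{sm}^{\{t,\overline{B\cup\{o\}}\}}(\alpha)=F^{\{t\}\cup B\cup\{o\}}_{sm}(\alpha)\,Q_m/Q_s$, and the avoidance hitting cost is $U_s^{\{t,\overline{B\cup\{o\}}\}}(\alpha)=\sum_{m\in\mathcal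 T}F_{sm}^{\{t,\overline{B\cup\{o\}}\}}(\alpha)\,r_m$ with $r_m=\sum_{i:\,e_{mi}\in E}P_{mi}(\alpha)w_{mi}\,Q_i/Q_m$ (terms with $Q_m=0$ omitted). Equivalently, it is the expected total edge cost of the walk from $s$ until absorption, conditioned on being absorbed at $t$. When $B=\emptyset$ these are written $F^{\{t,\overline o\}}$, $U^{\{t,\overline o\}}$, $Q^{\{t,\overline o\}}$. The classical hitting cost $U_s^t$ is the expected total edge cost incurred by the random walk with transition matrix $P$ on $G$ started at $s$ before first hitting $t$. *)

From Stdlib Require Import Reals Lra List Relations ClassicalEpsilon.
Import ListNotations.
Open Scope R_scope.

(* Nodes of G are 0,...,n-1.  P, w : nat -> nat -> R are the transition
   matrix and edge costs (only entries with indices < n matter). *)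

Fixpoint sumR (n : nat) (f : nat -> R) : R :=
  match n with O => 0 | S m => sumR m f + f m end.

Fixpoint sum_seqs (n k : nat) (f : list nat -> R) : R :=
  match k with
  | O => f nil
  | S k' => sumR n (fun i => sum_seqs n k' (fun l => f (i :: l)))
  end.

Fixpoint walk_weight (p : nat -> nat -> R) (x : nat) (l : list nat) : R :=
  match l with nil => 1 | y :: l' => p x y * walk_weight p y l' end.

Fixpoint walk_cost (w : nat -> nat -> R) (x : nat) (l : list nat) : R :=
  match l with nil => 0 | y :: l' => w x y + walk_cost w y l' end.

Definition edge (n : nat) (P : nat -> nat -> R) (i j : nat) : Prop :=
  (i < n)%nat /\ (j < n)%nat /\ 0 < P i j.

Definition reachable (n : nat) (P : nat -> nat -> R) : nat -> nat -> Prop :=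
  clos_refl_trans nat (edge n P).

Fixpoint is_walk (E : nat -> nat -> Prop) (x : nat) (l : list nat) : Prop :=
  match l with nil => True | y :: l' => E x y /\ is_walk E y l' end.

Definition is_path (n : nat) (P : nat -> nat -> R) (s t : nat) (l : list nat) : Prop :=
  is_walk (edge n P) s l /\ last (s :: l) s = t /\ NoDup (s :: l).

Definition shortest_cost (n : nat) (P w : nat -> nat -> R) (s t : nat) (L : R) : Prop :=
  (exists l, is_path n P s t l /\ walk_cost w s l = L) /\
  (forall l, is_path n P s t l -> L <= walk_cost w s l).

(* value of the series sum_{k>=0} u k (chosen when it converges) *)
Definition series_val (u : nat -> R) : R :=
  epsilon (inhabits 0) (fun L => Un_cv (fun N => sum_f_R0 u N) L).

Definition Pev (P w : nat -> nat -> R) (a : R) (i j : nat) : R :=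
  P i j * Rpower a (w i j).

Definition avoids (t : nat) (s : nat) (l : list nat) : bool :=
  negb (existsb (Nat.eqb t) (s :: l)).

(* Probability that the chain G_alpha from s is absorbed at t after exactly
   k+1 steps (all intermediate states in T = V \ {t}). *)
Definition Q_term (n : nat) (P w : nat -> nat -> R) (s t : nat) (a : R) (k : nat) : R :=
  sum_seqs n k (fun l => if avoids t s l then walk_weight (Pev P w a) s (l ++ [t]) else 0).

(* E[ total edge cost ; absorbed at t after exactly k+1 steps ] *)
Definition C_term (n : nat) (P w : nat -> nat -> R) (s t : nat) (a : R) (k : nat) : R :=
  sum_seqs n k (fun l => if avoids t s l
                         then walk_weight (Pev P w a) s (l ++ [t]) * walk_cost w s (l ++ [t])
                         else 0).

Definition Qabs (n : nat) (P w : nat -> nat -> R) (s t : nat) (a : R) : R :=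
  series_val (Q_term n P w s t a).

(* avoidance hitting cost U_s^{t, not o}(alpha) (B = empty):
   expected total edge cost until absorption, conditioned on absorption at t *)
Definition Uavoid (n : nat) (P w : nat -> nat -> R) (s t : nat) (a : R) : R :=
  series_val (C_term n P w s t a) / Qabs n P w s t a.

(* classical hitting cost U_s^t = E[ sum_{k < tau_t} w(X_k, X_{k+1}) ] for the
   walk with matrix P; term k = E[ w(X_k,X_{k+1}) ; X_0..X_k <> t ]. *)
Definition H_term (n : nat) (P w : nat -> nat -> R) (s t : nat) (k : nat) : R :=
  sum_seqs n k (fun l => if avoids t s l
                         then sumR n (fun j => walk_weight P s (l ++ [j]) * w (last (s :: l) s) j)
                         else 0).

Definition hitting_cost (n : nat) (P w : nat -> nat -> R) (s t : nat) : R :=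
  series_val (H_term n P w s t).

(* An absorption at [t] is a walk s = x_0, ..., x_k, t meeting [t] only at its last
   step; in G_alpha it has weight p alpha^c, with p its P-weight and c its cost. So
   Q(alpha) = sum p alpha^c, the numerator is C(alpha) = sum p c alpha^c, and U = C / Q
   is the mean cost under the weights p alpha^c. The series converge because the mass
   of walks staying among the nodes that can still reach [t] decays geometrically
   (from each such node [t] is hit within a fixed number of steps with probability
   bounded below), while costs grow only linearly.
   (c) For a1 < a2 the symmetrised double sum
   sum p p' (c - c') (a1^c a2^c' - a2^c a1^c') is nonpositive, i.e.
   C(a1) Q(a2) <= C(a2) Q(a1).
   (a) Every absorbed walk costs at least L (cutting out loops leaves a path) and a
   shortest path is absorbed with some weight m0 > 0. Writing alpha^c = alpha^L
   alpha^(c - L) gives 0 <= U(alpha) - L <= (eps Q(1) + alpha^eps K) / m0 for every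
   eps > 0.
   (b) At alpha = 1 the one-step balance of the walk telescopes: Q(1) and C(1) differ
   from 1 and from the hitting cost by the mass and cost of the walks that still avoid
   [t]; if [t] is reachable from everywhere reachable, these walks are never killed
   and vanish with the killed mass. Left continuity at 1 follows termwise from
   0 <= 1 - alpha^c <= (1/alpha - 1) c. *)

From Stdlib Require Import Reals List Relations Lra Lia ListDec ClassicalEpsilon Arith Bool.
Import ListNotations.
Open Scope R_scope.

Lemma sumR_ext n f g : (forall i, (i < n)%nat -> f i = g i) -> sumR n f = sumR n g.
Proof.
  induction n as [|n IH]; simpl; intros H; auto.
  rewrite IH by (intros; apply H; lia). rewrite H by lia. reflexivity.
Qed.

Lemma sumR_add n f g : sumR n (fun i => f i + g i) = sumR n f + sumR n g.
Proof. induction n as [|n IH]; simpl; [lra|]. rewrite IH; lra. Qed.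

Lemma sumR_scal n c f : sumR n (fun i => c * f i) = c * sumR n f.
Proof. induction n as [|n IH]; simpl; [lra|]. rewrite IH; lra. Qed.

Lemma sumR_sub n f g : sumR n (fun i => f i - g i) = sumR n f - sumR n g.
Proof. induction n as [|n IH]; simpl; [lra|]. rewrite IH; lra. Qed.

Lemma sumR_const0 n : sumR n (fun _ => 0) = 0.
Proof. induction n as [|n IH]; simpl; [lra|]. rewrite IH; lra. Qed.

Lemma sumR_le n f g : (forall i, (i < n)%nat -> f i <= g i) -> sumR n f <= sumR n g.
Proof.
  induction n as [|n IH]; simpl; intros H; [lra|].
  pose proof (H n ltac:(lia)). pose proof (IH ltac:(intros; apply H; lia)). lra.
Qed.

Lemma sumR_ge0 n f : (forall i, (i < n)%nat -> 0 <= f i) -> 0 <= sumR n f.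
Proof. intros H. rewrite <- (sumR_const0 n). now apply sumR_le. Qed.

Lemma sumR_term_le n f j : (forall i, (i < n)%nat -> 0 <= f i) -> (j < n)%nat -> f j <= sumR n f.
Proof.
  induction n as [|n IH]; simpl; intros H Hj; [lia|].
  assert (Hf : forall i, (i < n)%nat -> 0 <= f i) by (intros; apply H; lia).
  destruct (Nat.eq_dec j n) as [->|Hne].
  - pose proof (sumR_ge0 n f Hf). lra.
  - pose proof (IH Hf ltac:(lia)). pose proof (H n ltac:(lia)). lra.
Qed.

Lemma sumR_split_at n f j : (j < n)%nat ->
  sumR n f = sumR n (fun i => if Nat.eqb j i then 0 else f i) + f j.
Proof.
  induction n as [|n IH]; simpl; intros Hj; [lia|].
  destruct (Nat.eqb_spec j n) as [->|Hne].
  - rewrite (sumR_ext n (fun i => if Nat.eqb n i then 0 else f i) f); [lra|].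
    intros i Hi. destruct (Nat.eqb_spec n i); [lia|auto].
  - rewrite IH by lia. lra.
Qed.

Lemma sumR_comm n m f :
  sumR n (fun i => sumR m (fun j => f i j)) = sumR m (fun j => sumR n (fun i => f i j)).
Proof.
  induction n as [|n IH]; simpl.
  - now rewrite sumR_const0.
  - now rewrite IH, <- sumR_add.
Qed.

Lemma sumR_mul n m f g : sumR n f * sumR m g = sumR n (fun i => sumR m (fun j => f i * g j)).
Proof.
  rewrite Rmult_comm, <- sumR_scal. apply sumR_ext; intros.
  now rewrite Rmult_comm, <- sumR_scal.
Qed.

Lemma sum_f_R0_sumR u N : sum_f_R0 u N = sumR (S N) u.
Proof. induction N as [|N IH]; simpl; [lra|]. now rewrite IH. Qed.

Definition in_nodes (n : nat) (l : list nat) : Prop := Forall (fun i => (i < n)%nat) l.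

Lemma in_nodes_app n l1 l2 : in_nodes n (l1 ++ l2) <-> in_nodes n l1 /\ in_nodes n l2.
Proof. apply Forall_app. Qed.

Lemma in_nodes_snoc n l j : in_nodes n l -> (j < n)%nat -> in_nodes n (l ++ [j]).
Proof. intros. apply in_nodes_app; split; auto. now constructor. Qed.

Section SumSeqs.

Variable n : nat.

Lemma sum_seqs_ext k f g : (forall l, in_nodes n l -> f l = g l) ->
  sum_seqs n k f = sum_seqs n k g.
Proof.
  revert f g; induction k as [|k IH]; simpl; intros f g H.
  - apply H; constructor.
  - apply sumR_ext; intros i Hi. apply IH; intros l Hl. apply H; now constructor.
Qed.

Lemma sum_seqs_le k f g : (forall l, in_nodes n l -> length l = k -> f l <= g l) ->
  sum_seqs n k f <= sum_seqs n k g.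
Proof.
  revert f g; induction k as [|k IH]; simpl; intros f g H.
  - apply H; [constructor | auto].
  - apply sumR_le; intros i Hi. apply IH; intros l Hl Hk.
    apply H; [now constructor | simpl; auto].
Qed.

Lemma sum_seqs_add k f g : sum_seqs n k (fun l => f l + g l) = sum_seqs n k f + sum_seqs n k g.
Proof.
  revert f g; induction k as [|k IH]; simpl; intros; auto.
  rewrite <- sumR_add. apply sumR_ext; intros; apply IH.
Qed.

Lemma sum_seqs_scal k c f : sum_seqs n k (fun l => c * f l) = c * sum_seqs n k f.
Proof.
  revert f; induction k as [|k IH]; simpl; intros; auto.
  rewrite <- sumR_scal. apply sumR_ext; intros; apply IH.
Qed.

Lemma sum_seqs_scal_r k c f : sum_seqs n k (fun l => f l * c) = sum_seqs n k f * c.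
Proof. rewrite Rmult_comm, <- sum_seqs_scal. apply sum_seqs_ext; intros; ring. Qed.

Lemma sum_seqs_sub k f g : sum_seqs n k (fun l => f l - g l) = sum_seqs n k f - sum_seqs n k g.
Proof.
  revert f g; induction k as [|k IH]; simpl; intros; auto.
  rewrite <- sumR_sub. apply sumR_ext; intros; apply IH.
Qed.

Lemma sum_seqs_const0 k : sum_seqs n k (fun _ => 0) = 0.
Proof.
  induction k as [|k IH]; simpl; auto.
  rewrite (sumR_ext _ _ (fun _ => 0)) by auto. apply sumR_const0.
Qed.

Lemma sum_seqs_ge0 k f : (forall l, in_nodes n l -> 0 <= f l) -> 0 <= sum_seqs n k f.
Proof. intros H. rewrite <- (sum_seqs_const0 k). apply sum_seqs_le; auto. Qed.

Lemma sum_seqs_term_le k f l0 : (forall l, in_nodes n l -> 0 <= f l) ->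
  in_nodes n l0 -> length l0 = k -> f l0 <= sum_seqs n k f.
Proof.
  revert f l0; induction k as [|k IH]; simpl; intros f l0 H Hl Hk.
  - destruct l0; simpl in Hk; [lra | lia].
  - destruct l0 as [|i l0]; simpl in Hk; [lia|]. injection Hk as <-. inversion Hl; subst.
    apply Rle_trans with (sum_seqs n (length l0) (fun l => f (i :: l))).
    + apply (IH (fun l => f (i :: l))); auto. intros; apply H; now constructor.
    + apply (sumR_term_le n (fun j => sum_seqs n (length l0) (fun l => f (j :: l)))); auto.
      intros j Hj. apply sum_seqs_ge0. intros; apply H; now constructor.
Qed.

Lemma sum_seqs_app k1 k2 f :
  sum_seqs n (k1 + k2) f = sum_seqs n k1 (fun l1 => sum_seqs n k2 (fun l2 => f (l1 ++ l2))).
Proof.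
  revert f; induction k1 as [|k1 IH]; simpl; intros; auto.
  apply sumR_ext; intros; apply IH.
Qed.

Lemma sum_seqs_snoc k f : sum_seqs n (S k) f = sum_seqs n k (fun l => sumR n (fun j => f (l ++ [j]))).
Proof. rewrite <- Nat.add_1_r. apply sum_seqs_app. Qed.

Lemma sumR_sum_seqs_comm m k h :
  sumR m (fun i => sum_seqs n k (h i)) = sum_seqs n k (fun l => sumR m (fun i => h i l)).
Proof.
  revert h; induction k as [|k IH]; simpl; intros; auto.
  rewrite sumR_comm. apply sumR_ext; intros; apply IH.
Qed.

Lemma sum_seqs_comm k1 k2 g :
  sum_seqs n k1 (fun l1 => sum_seqs n k2 (fun l2 => g l1 l2)) =
  sum_seqs n k2 (fun l2 => sum_seqs n k1 (fun l1 => g l1 l2)).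
Proof.
  revert g; induction k1 as [|k1 IH]; simpl; intros; auto.
  rewrite (sumR_ext _ _ (fun i => sum_seqs n k2 (fun l2 => sum_seqs n k1 (fun l1 => g (i :: l1) l2))))
    by (intros; apply IH).
  apply sumR_sum_seqs_comm.
Qed.

Lemma sum_seqs_mul k k' f g :
  sum_seqs n k f * sum_seqs n k' g = sum_seqs n k (fun l => sum_seqs n k' (fun l' => f l * g l')).
Proof.
  rewrite <- sum_seqs_scal_r. apply sum_seqs_ext; intros.
  now rewrite <- sum_seqs_scal.
Qed.

End SumSeqs.

Lemma last_cons_default (l : list nat) y d : last (y :: l) d = last l y.
Proof.
  revert y d; induction l as [|x l IH]; intros; simpl; auto.
  change (last (x :: l) d = last (x :: l) y). now rewrite (IH x d), (IH x y).
Qed.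

Lemma last_app_default (l1 l2 : list nat) x : last (l1 ++ l2) x = last l2 (last l1 x).
Proof.
  revert x; induction l1 as [|y l1 IH]; intros; auto.
  change (last (y :: (l1 ++ l2)) x = last l2 (last (y :: l1) x)).
  now rewrite !last_cons_default.
Qed.

Lemma walk_weight_app p x l1 l2 :
  walk_weight p x (l1 ++ l2) = walk_weight p x l1 * walk_weight p (last l1 x) l2.
Proof.
  revert x; induction l1 as [|y l1 IH]; intros; [simpl; lra|].
  cbn [app walk_weight walk_cost]. rewrite IH, last_cons_default. lra.
Qed.

Lemma walk_cost_app w x l1 l2 :
  walk_cost w x (l1 ++ l2) = walk_cost w x l1 + walk_cost w (last l1 x) l2.
Proof.
  revert x; induction l1 as [|y l1 IH]; intros; [simpl; lra|].
  cbn [app walk_weight walk_cost]. rewrite IH, last_cons_default. lra.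
Qed.

Lemma is_walk_app (E : nat -> nat -> Prop) x l1 l2 :
  is_walk E x (l1 ++ l2) <-> is_walk E x l1 /\ is_walk E (last l1 x) l2.
Proof.
  revert x; induction l1 as [|y l1 IH]; intros; [simpl; tauto|].
  cbn [app is_walk]. rewrite IH, last_cons_default. tauto.
Qed.

Lemma walk_weight_Pev P w a x l :
  walk_weight (Pev P w a) x l = walk_weight P x l * Rpower a (walk_cost w x l).
Proof.
  revert x; induction l as [|y l IH]; intros; simpl.
  - unfold Rpower. rewrite Rmult_0_l, exp_0. lra.
  - rewrite IH, Rpower_plus. unfold Pev. lra.
Qed.

Lemma walk_weight_ge0 n p x l : (forall i j, (i < n)%nat -> (j < n)%nat -> 0 <= p i j) ->
  (x < n)%nat -> in_nodes n l -> 0 <= walk_weight p x l.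
Proof.
  intros Hp. revert x; induction l as [|y l IH]; intros x Hx Hl; simpl; [lra|].
  inversion Hl; subst. apply Rmult_le_pos; auto.
Qed.

Lemma last_in_nodes n l x : (x < n)%nat -> in_nodes n l -> (last l x < n)%nat.
Proof.
  revert x; induction l as [|y l IH]; intros x Hx Hl; [simpl; auto|].
  inversion Hl; subst. rewrite last_cons_default. auto.
Qed.

Lemma avoids_nil t x : avoids t x [] = negb (Nat.eqb t x).
Proof. unfold avoids; simpl. now destruct (Nat.eqb t x). Qed.

Lemma avoids_cons t x y l : avoids t x (y :: l) = negb (Nat.eqb t x) && avoids t y l.
Proof. unfold avoids; simpl. now destruct (Nat.eqb t x). Qed.

Lemma avoids_snoc t x l j : avoids t x (l ++ [j]) = avoids t x l && negb (Nat.eqb t j).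
Proof.
  unfold avoids; simpl. rewrite existsb_app; simpl.
  now destruct (Nat.eqb t x), (existsb (Nat.eqb t) l), (Nat.eqb t j).
Qed.

Lemma series_val_eq u l : Un_cv (fun N => sum_f_R0 u N) l -> series_val u = l.
Proof.
  intros H. unfold series_val.
  assert (Hex : exists L, Un_cv (fun N => sum_f_R0 u N) L) by (exists l; auto).
  eapply UL_sequence; [apply (epsilon_spec (inhabits 0) _ Hex) | exact H].
Qed.

Lemma Un_cv_const c : Un_cv (fun _ => c) c.
Proof. intros eps He. exists O. intros. unfold Rdist. now rewrite Rminus_diag, Rabs_R0. Qed.

Lemma Un_cv_succ u l : Un_cv u l -> Un_cv (fun N => u (S N)) l.
Proof. intros H eps He. destruct (H eps He) as [N HN]. exists N. intros m Hm. apply HN. lia. Qed.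

Lemma Un_cv_of_succ u l : Un_cv (fun N => u (S N)) l -> Un_cv u l.
Proof.
  intros H eps He. destruct (H eps He) as [N HN]. exists (S N). intros [|m] Hm; [lia|].
  apply HN. lia.
Qed.

Lemma Un_cv_squeeze0 u v : (forall N, 0 <= u N <= v N) -> Un_cv v 0 -> Un_cv u 0.
Proof.
  intros H Hv eps He. destruct (Hv eps He) as [N HN]. exists N. intros m Hm.
  specialize (HN m Hm). specialize (H m). unfold Rdist in *. rewrite Rminus_0_r in *.
  rewrite Rabs_right in * by lra. lra.
Qed.

Lemma Un_cv_lin u v x y al be :
  Un_cv u x -> Un_cv v y -> Un_cv (fun N => al * u N + be * v N) (al * x + be * y).
Proof. intros Hu Hv. apply CV_plus; apply CV_mult; auto; apply Un_cv_const. Qed.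

Lemma sum_f_R0_lin al be u v N :
  sum_f_R0 (fun k => al * u k + be * v k) N = al * sum_f_R0 u N + be * sum_f_R0 v N.
Proof. rewrite !sum_f_R0_sumR, sumR_add, !sumR_scal. auto. Qed.

Lemma term_le_partial_sum u N : (forall k, 0 <= u k) -> u N <= sum_f_R0 u N.
Proof. intros H. destruct N; simpl; [lra|]. pose proof (cond_pos_sum u N H). lra. Qed.

Lemma series_cv_of_bounded u B : (forall k, 0 <= u k) -> (forall N, sum_f_R0 u N <= B) ->
  exists l, Un_cv (fun N => sum_f_R0 u N) l.
Proof.
  intros H0 HB. destruct (growing_cv (fun N => sum_f_R0 u N)) as [l Hl].
  - intros N. simpl. pose proof (H0 (S N)). lra.
  - exists B. intros x [N ->]. auto.
  - exists l; auto.
Qed.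

Lemma series_terms_cv0 u l : Un_cv (fun N => sum_f_R0 u N) l -> Un_cv u 0.
Proof.
  intros H. apply Un_cv_of_succ.
  apply (Un_cv_ext (fun N => sum_f_R0 u (S N) - sum_f_R0 u N)); [intros N; simpl; ring|].
  replace 0 with (l - l) by ring. apply CV_minus; auto. now apply (Un_cv_succ (fun N => sum_f_R0 u N)).
Qed.

Lemma telescope (a q h : nat -> R) N : (forall k, a (S k) + q k = a k + h k) ->
  sum_f_R0 q N = a O + sum_f_R0 h N - a (S N).
Proof.
  intros E. induction N as [|N IH]; simpl.
  - pose proof (E O). lra.
  - rewrite IH. pose proof (E (S N)). lra.
Qed.

Lemma sum_succ_mul_pow_le rho N : 0 < rho < 1 ->
  sum_f_R0 (fun k => INR (S k) * rho ^ k) N <= / (1 - rho) ^ 2.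
Proof.
  intros Hr.
  assert (E : forall N, sum_f_R0 (fun k => INR (S k) * rho ^ k) N * (1 - rho) ^ 2 =
     1 - INR (S (S N)) * rho ^ (S N) + INR (S N) * rho ^ (S (S N))).
  { induction N0 as [|N0 IH]; [simpl; lra|].
    rewrite tech5, Rmult_plus_distr_r, IH. rewrite !S_INR. simpl. ring. }
  assert (Hq : 0 < (1 - rho) ^ 2) by (apply pow_lt; lra).
  assert (INR (S N) * rho ^ S (S N) <= INR (S (S N)) * rho ^ S N).
  { replace (rho ^ S (S N)) with (rho * rho ^ S N) by reflexivity. rewrite (S_INR (S N)).
    assert (0 <= INR (S N) * rho ^ S N) by (apply Rmult_le_pos; [apply pos_INR | apply pow_le; lra]).
    pose proof (pow_lt rho (S N) (proj1 Hr)). nra. }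
  apply (Rmult_le_reg_r ((1 - rho) ^ 2)); auto. rewrite Rinv_l, E by lra. lra.
Qed.

Lemma geometric_bound_of_contraction (A : nat -> R) D r : (1 <= D)%nat -> 0 < r < 1 ->
  (forall k, 0 <= A k <= 1) -> (forall k, A (k + D)%nat <= r * A k) ->
  exists rho, 0 < rho < 1 /\ forall k, A k <= rho ^ k / r.
Proof.
  intros HD Hr HA Hdec.
  set (rho := Rpower r (/ INR D)).
  assert (HDpos : 0 < INR D) by (apply lt_0_INR; lia).
  assert (Hrho : 0 < rho < 1).
  { unfold rho, Rpower. split; [apply exp_pos|]. rewrite <- exp_0. apply exp_increasing.
    assert (ln r < 0) by (rewrite <- ln_1; apply ln_increasing; lra).
    assert (0 < / INR D) by (apply Rinv_0_lt_compat; auto). nra. }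
  assert (HrD : rho ^ D = r).
  { rewrite <- Rpower_pow by lra. unfold rho. rewrite Rpower_mult, Rinv_l by lra.
    apply Rpower_1; lra. }
  exists rho. split; auto.
  assert (Hbound : forall m k, (k <= m)%nat -> A k <= rho ^ k / r).
  { induction m as [|m IH]; intros k Hk.
    - replace k with O by lia. simpl. pose proof (HA 0%nat).
      unfold Rdiv. rewrite Rmult_1_l. apply Rle_trans with 1; [lra|].
      rewrite <- Rinv_1 at 1. apply Rinv_le_contravar; lra.
    - destruct (Nat.lt_ge_cases k D) as [Hl|Hge].
      + pose proof (HA k). apply Rle_trans with 1; [lra|].
        assert (r <= rho ^ k).
        { rewrite <- HrD. replace D with (k + (D - k))%nat by lia. rewrite pow_add.
          pose proof (pow_lt rho k (proj1 Hrho)).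
          pose proof (pow_lt_1_compat rho (D - k) ltac:(lra) ltac:(lia)). nra. }
        apply (Rmult_le_reg_r r); [lra|]. unfold Rdiv. rewrite Rmult_assoc, Rinv_l; lra.
      + replace k with ((k - D) + D)%nat by lia. eapply Rle_trans; [apply Hdec|].
        pose proof (IH (k - D)%nat ltac:(lia)). rewrite pow_add, HrD.
        unfold Rdiv in *. replace (rho ^ (k - D) * r * / r) with (r * (rho ^ (k - D) * / r)) by (field; lra).
        apply Rmult_le_compat_l; lra. }
  intros k; apply (Hbound k k); auto.
Qed.

Lemma finite_uniform_eventual_bound (G : nat -> nat -> R) N :
  (forall x, (x < N)%nat -> exists d om, 0 < om /\ forall e, G x (d + e)%nat <= 1 - om) ->
  exists D dl, 0 < dl /\ forall x e, (x < N)%nat -> G x (D + e)%nat <= 1 - dl.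
Proof.
  induction N as [|N IH]; intros H.
  - exists O, 1. split; [lra|]. intros; lia.
  - destruct IH as [D [dl [Hdl HD]]]; [intros; apply H; lia|].
    destruct (H N ltac:(lia)) as [d [om [Hom Hd]]].
    exists (D + d)%nat, (Rmin dl om). split; [now apply Rmin_pos|].
    intros x e Hx. pose proof (Rmin_l dl om). pose proof (Rmin_r dl om).
    destruct (Nat.eq_dec x N) as [->|Hne].
    + replace (D + d + e)%nat with (d + (D + e))%nat by lia. pose proof (Hd (D + e)%nat). lra.
    + replace (D + d + e)%nat with (D + (d + e))%nat by lia. pose proof (HD x (d + e)%nat ltac:(lia)). lra.
Qed.

Lemma series_cv_of_le u v : (forall k, 0 <= u k <= v k) ->
  (exists l, Un_cv (fun N => sum_f_R0 v N) l) -> exists l, Un_cv (fun N => sum_f_R0 u N) l.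
Proof.
  intros Huv [l Hl]. apply series_cv_of_bounded with l; [intros k; apply Huv|].
  intros N. apply Rle_trans with (sum_f_R0 v N).
  - apply sum_growing. intros k; apply Huv.
  - apply sum_incr; auto. intros k. pose proof (Huv k). lra.
Qed.

Lemma sumR_double_le0_of_antisym m (Phi : nat -> nat -> R) :
  (forall k k', (k < m)%nat -> (k' < m)%nat -> Phi k k' + Phi k' k <= 0) ->
  sumR m (fun k => sumR m (fun k' => Phi k k')) <= 0.
Proof.
  intros H.
  assert (Hsym : sumR m (fun k => sumR m (fun k' => Phi k k' + Phi k' k)) <= 0).
  { rewrite <- (sumR_const0 m). apply sumR_le; intros k Hk.
    rewrite <- (sumR_const0 m). apply sumR_le; intros k' Hk'. auto. }
  rewrite (sumR_ext m _ (fun k => sumR m (fun k' => Phi k k') + sumR m (fun k' => Phi k' k)))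
    in Hsym by (intros; apply sumR_add).
  rewrite sumR_add, (sumR_comm m m (fun k k' => Phi k' k)) in Hsym. lra.
Qed.

(* [S 1 - S a] is at most the tail of [S 1] beyond [N] plus [(1/a - 1) K N]. *)
Lemma series_left_cont_at_1 (u : R -> nat -> R) (S : R -> R) (K : nat -> R) :
  (forall a k, 0 < a < 1 -> 0 <= u a k <= u 1 k) ->
  (forall a, 0 < a <= 1 -> Un_cv (fun N => sum_f_R0 (u a) N) (S a)) ->
  (forall N a, 0 < a < 1 -> sum_f_R0 (u 1) N - sum_f_R0 (u a) N <= (/ a - 1) * K N) ->
  limit1_in S (fun a => 0 < a < 1) (S 1) 1.
Proof.
  intros Hu Hcv Hd eps Heps.
  destruct (Hcv 1 ltac:(lra) (eps / 2) ltac:(lra)) as [N HN]. specialize (HN N (le_n N)).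
  unfold Rdist in HN. apply Rabs_def2 in HN.
  set (KN := Rabs (K N) + 1). assert (HKN : 0 < KN) by (unfold KN; pose proof (Rabs_pos (K N)); lra).
  exists (Rmin (1/2) (eps / (4 * KN))). split; [apply Rmin_pos; [lra | apply Rdiv_lt_0_compat; lra]|].
  intros x [Hx Hdx]. simpl in Hdx |- *. unfold Rdist in *.
  pose proof (Rmin_l (1/2) (eps / (4 * KN))). pose proof (Rmin_r (1/2) (eps / (4 * KN))).
  rewrite Rabs_left1 in Hdx by lra.
  assert (Hle : S x <= S 1).
  { eapply Rle_cv_lim; [|apply Hcv; lra|apply Hcv; lra]. intros m. apply sum_Rle. intros; apply Hu; auto. }
  assert (Hge : sum_f_R0 (u x) N <= S x) by (apply sum_incr; [apply Hcv; lra | intros; apply Hu; auto]).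
  pose proof (Hd N x Hx).
  set (d := / x - 1) in *.
  assert (d * x = 1 - x) by (unfold d; field; lra).
  assert (Hd2 : 0 <= d <= 2 * (1 - x)) by nra.
  assert (d * K N <= d * KN) by (apply Rmult_le_compat_l; [lra | unfold KN; pose proof (Rle_abs (K N)); lra]).
  assert (d * KN <= eps / 2).
  { apply Rle_trans with (2 * (1 - x) * KN); [apply Rmult_le_compat_r; lra|].
    assert (2 * (1 - x) * KN <= 2 * (eps / (4 * KN)) * KN) by (apply Rmult_le_compat_r; lra).
    replace (2 * (eps / (4 * KN)) * KN) with (eps / 2) in * by (field; lra). lra. }
  rewrite Rabs_left1 by lra. lra.
Qed.

Lemma limit_at_0_of_Rpower_bound (f : R -> R) L Z K m : 0 <= Z -> 0 <= K -> 0 < m ->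
  (forall a eps, 0 < a < 1 -> 0 < eps -> 0 <= f a - L <= (eps * Z + Rpower a eps * K) / m) ->
  limit1_in f (fun a => 0 < a < 1) L 0.
Proof.
  intros HZ HK Hm Hb eta Heta.
  set (eps := eta * m / (2 * (Z + 1))). set (tau := eta * m / (2 * (K + 1))).
  assert (Heps : 0 < eps) by (unfold eps; apply Rdiv_lt_0_compat; nra).
  assert (Htau : 0 < tau) by (unfold tau; apply Rdiv_lt_0_compat; nra).
  exists (Rmin 1 (exp (ln tau / eps))). split; [apply Rmin_pos; [lra | apply exp_pos]|].
  intros a [Ha Hda]. simpl in Hda |- *. unfold Rdist in *.
  rewrite Rminus_0_r, Rabs_right in Hda by lra.
  pose proof (Rmin_l 1 (exp (ln tau / eps))). pose proof (Rmin_r 1 (exp (ln tau / eps))).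
  assert (Hpow : Rpower a eps < tau).
  { unfold Rpower. rewrite <- (exp_ln tau) by auto. apply exp_increasing.
    assert (Hln : ln a < ln tau / eps) by (rewrite <- (ln_exp (ln tau / eps)); apply ln_increasing; lra).
    apply (Rmult_lt_compat_l eps) in Hln; auto.
    replace (eps * (ln tau / eps)) with (ln tau) in Hln by (field; lra). lra. }
  destruct (Hb a eps Ha Heps) as [B0 B1].
  rewrite Rabs_right by lra.
  assert (eps * Z <= eta * m / 2 * (Z / (Z + 1))) by (right; unfold eps; field; lra).
  assert (Rpower a eps * K <= eta * m / 2 * (K / (K + 1))).
  { replace (eta * m / 2 * (K / (K + 1))) with (tau * K) by (unfold tau; field; lra).
    apply Rmult_le_compat_r; lra. }
  assert (Z / (Z + 1) < 1) by (apply (Rmult_lt_reg_r (Z + 1)); [lra|]; unfold Rdiv; rewrite Rmult_assoc, Rinv_l; lra).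
  assert (K / (K + 1) < 1) by (apply (Rmult_lt_reg_r (K + 1)); [lra|]; unfold Rdiv; rewrite Rmult_assoc, Rinv_l; lra).
  assert (0 < eta * m / 2) by nra.
  assert (eps * Z + Rpower a eps * K < eta * m) by nra.
  apply Rle_lt_trans with ((eps * Z + Rpower a eps * K) / m); auto.
  apply (Rmult_lt_reg_r m); auto. unfold Rdiv. rewrite Rmult_assoc, Rinv_l; lra.
Qed.

Lemma Rpower_1_base c : Rpower 1 c = 1.
Proof. unfold Rpower. now rewrite ln_1, Rmult_0_r, exp_0. Qed.

Lemma Rpower_pos a c : 0 < Rpower a c.
Proof. apply exp_pos. Qed.

Lemma ln_le0 a : 0 < a <= 1 -> ln a <= 0.
Proof.
  intros Ha. destruct (Req_dec a 1) as [->|Hne]; [rewrite ln_1; lra|].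
  rewrite <- ln_1. left. apply ln_increasing; lra.
Qed.

Lemma Rpower_le1 a c : 0 < a <= 1 -> 0 <= c -> Rpower a c <= 1.
Proof. intros Ha Hc. rewrite <- (Rpower_1_base c). now apply Rle_Rpower_l. Qed.

Lemma Rpower_le_exponent a c c' : 0 < a <= 1 -> c <= c' -> Rpower a c' <= Rpower a c.
Proof.
  intros Ha Hc. unfold Rpower. pose proof (ln_le0 a Ha).
  destruct (Req_dec (c' * ln a) (c * ln a)) as [E|E]; [rewrite E; lra|].
  left. apply exp_increasing. nra.
Qed.

Lemma Rpower_rearrangement a1 a2 c c' : 0 < a1 -> a1 < a2 ->
  (c - c') * (Rpower a1 c * Rpower a2 c' - Rpower a2 c * Rpower a1 c') <= 0.
Proof.
  intros H1 H2. unfold Rpower. rewrite <- !exp_plus.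
  assert (ln a1 < ln a2) by (apply ln_increasing; lra).
  destruct (Rle_lt_dec c' c).
  - assert (exp (c * ln a1 + c' * ln a2) <= exp (c * ln a2 + c' * ln a1)).
    { destruct (Req_dec c c') as [->|]; [right; f_equal; ring|].
      left. apply exp_increasing. nra. }
    nra.
  - assert (exp (c * ln a2 + c' * ln a1) <= exp (c * ln a1 + c' * ln a2)).
    { left. apply exp_increasing. nra. }
    nra.
Qed.

Lemma one_sub_Rpower_le a c : 0 < a <= 1 -> 0 <= c -> 1 - Rpower a c <= (/ a - 1) * c.
Proof.
  intros Ha Hc. unfold Rpower.
  pose proof (exp_ineq1_le (c * ln a)). pose proof (exp_ineq1_le (ln (/ a))).
  rewrite exp_ln in H0 by (apply Rinv_0_lt_compat; lra).
  rewrite ln_Rinv in H0 by lra. nra.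
Qed.

(* Costs below [eps] contribute at most [eps]; larger ones are damped by [a^eps]. *)
Lemma Rpower_mul_le a x eps : 0 < a < 1 -> 0 <= x -> 0 < eps ->
  Rpower a x * x <= eps + Rpower a eps * x.
Proof.
  intros Ha Hx He. pose proof (Rpower_pos a eps).
  pose proof (Rpower_le1 a x ltac:(lra) Hx).
  destruct (Rle_lt_dec x eps).
  - pose proof (Rpower_pos a x). nra.
  - pose proof (Rpower_le_exponent a eps x ltac:(lra) ltac:(lra)). nra.
Qed.

Section Network.

Variables (n : nat) (P w : nat -> nat -> R).

Hypothesis P_ge0 : forall i j, (i < n)%nat -> (j < n)%nat -> 0 <= P i j.
Hypothesis P_row_sum : forall i, (i < n)%nat -> sumR n (fun j => P i j) = 1.
Hypothesis w_pos : forall i j, (i < n)%nat -> (j < n)%nat -> 0 < P i j -> 0 < w i j.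

Lemma P_le1 i j : (i < n)%nat -> (j < n)%nat -> P i j <= 1.
Proof. intros Hi Hj. rewrite <- (P_row_sum i Hi). apply (sumR_term_le n (fun j => P i j)); auto. Qed.

Lemma walk_weight_le1 x l : (x < n)%nat -> in_nodes n l -> walk_weight P x l <= 1.
Proof.
  revert x; induction l as [|y l IH]; intros x Hx Hl; simpl; [lra|]. inversion Hl; subst.
  pose proof (IH y H1 H2). pose proof (walk_weight_ge0 n P y l P_ge0 H1 H2).
  pose proof (P_le1 x y Hx H1). pose proof (P_ge0 x y Hx H1). nra.
Qed.

Lemma walk_weight_neq0_is_walk x l : (x < n)%nat -> in_nodes n l ->
  walk_weight P x l <> 0 -> is_walk (edge n P) x l.
Proof.
  revert x; induction l as [|y l IH]; intros x Hx Hl Hw; simpl; auto. inversion Hl; subst.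
  simpl in Hw. split.
  - repeat split; auto. destruct (P_ge0 x y Hx H1) as [|E]; auto. rewrite <- E in Hw; lra.
  - apply IH; auto. intro E; rewrite E in Hw; lra.
Qed.

Lemma is_walk_weight_pos x l : is_walk (edge n P) x l -> 0 < walk_weight P x l.
Proof.
  revert x; induction l as [|y l IH]; intros x Hw; simpl; [lra|].
  destruct Hw as [[_ [_ Hp]] Hw]. apply Rmult_lt_0_compat; auto.
Qed.

Lemma is_walk_in_nodes x l : is_walk (edge n P) x l -> in_nodes n l.
Proof.
  revert x; induction l as [|y l IH]; intros x Hw; [constructor|].
  destruct Hw as [[_ [Hy _]] Hw]. constructor; [exact Hy | exact (IH y Hw)].
Qed.

Lemma is_walk_reachable x l : is_walk (edge n P) x l -> reachable n P x (last l x).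
Proof.
  revert x; induction l as [|y l IH]; intros x Hw; [apply rt_refl|]. destruct Hw as [Hxy Hw].
  rewrite last_cons_default. eapply rt_trans; [apply rt_step, Hxy | exact (IH y Hw)].
Qed.

Lemma reachable_avoiding_walk x t : reachable n P x t -> x <> t ->
  exists l, avoids t x l = true /\ is_walk (edge n P) x (l ++ [t]).
Proof.
  intros H. apply clos_rt_rt1n in H. induction H as [x|x y z Hxy Hyz IH]; intros Hne; [congruence|].
  destruct (Nat.eq_dec y z) as [->|Hyz'].
  - exists []. rewrite avoids_nil. split; [destruct (Nat.eqb_spec z x); [congruence | reflexivity]|]. simpl; auto.
  - destruct (IH Hyz') as [l [Ha Hw]]. exists (y :: l). rewrite avoids_cons, Ha.
    split; [destruct (Nat.eqb_spec z x); [congruence | reflexivity]|]. simpl; auto.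
Qed.

Lemma walk_cost_ge0 x l : is_walk (edge n P) x l -> 0 <= walk_cost w x l.
Proof.
  revert x; induction l as [|y l IH]; intros x Hw; simpl; [lra|].
  destruct Hw as [[Hx [Hy Hp]] Hw]. pose proof (w_pos x y Hx Hy Hp). pose proof (IH y Hw). lra.
Qed.

Lemma walk_weight_mul_cost_ge0 x l : (x < n)%nat -> in_nodes n l ->
  0 <= walk_weight P x l * walk_cost w x l.
Proof.
  intros Hx Hl. destruct (Req_dec (walk_weight P x l) 0) as [->|E]; [lra|].
  apply Rmult_le_pos; [now apply (walk_weight_ge0 n) | apply walk_cost_ge0].
  now apply walk_weight_neq0_is_walk.
Qed.

Definition cost_bound : R := sumR n (fun i => sumR n (fun j => Rabs (w i j))).

Lemma cost_bound_ge0 : 0 <= cost_bound.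
Proof. apply sumR_ge0; intros; apply sumR_ge0; intros; apply Rabs_pos. Qed.

Lemma Rabs_w_le_cost_bound i j : (i < n)%nat -> (j < n)%nat -> Rabs (w i j) <= cost_bound.
Proof.
  intros Hi Hj. unfold cost_bound.
  eapply Rle_trans; [|apply (sumR_term_le n (fun i => sumR n (fun j => Rabs (w i j))) i)]; auto.
  - apply (sumR_term_le n (fun j => Rabs (w i j))); auto. intros; apply Rabs_pos.
  - intros; apply sumR_ge0; intros; apply Rabs_pos.
Qed.

Lemma Rabs_walk_cost_le x l : (x < n)%nat -> in_nodes n l ->
  Rabs (walk_cost w x l) <= INR (length l) * cost_bound.
Proof.
  revert x; induction l as [|y l IH]; intros x Hx Hl; [simpl; rewrite Rabs_R0; lra|].
  inversion Hl; subst. cbn [walk_cost length]. rewrite S_INR.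
  pose proof (IH y H1 H2). pose proof (Rabs_w_le_cost_bound x y Hx H1).
  pose proof (Rabs_triang (w x y) (walk_cost w y l)). lra.
Qed.

Lemma is_walk_cut_loop s X Y Z : is_walk (edge n P) s (X ++ Y ++ Z) ->
  last Y (last X s) = last X s ->
  is_walk (edge n P) s (X ++ Z) /\ walk_cost w s (X ++ Z) <= walk_cost w s (X ++ Y ++ Z) /\
  last (X ++ Z) s = last (X ++ Y ++ Z) s.
Proof.
  intros HW HL. apply is_walk_app in HW as [HX HYZ]. apply is_walk_app in HYZ as [HY HZ].
  rewrite HL in HZ. split; [apply is_walk_app; auto|]. split.
  - rewrite !walk_cost_app, HL. pose proof (walk_cost_ge0 _ Y HY). lra.
  - now rewrite !last_app_default, HL.
Qed.

Lemma walk_to_path s t l : is_walk (edge n P) s l -> last l s = t ->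
  exists l', is_path n P s t l' /\ walk_cost w s l' <= walk_cost w s l.
Proof.
  remember (length l) as m eqn:Hm. assert (Hlen : (length l <= m)%nat) by lia. clear Hm.
  revert l Hlen. induction m as [|m IH]; intros l Hlen HW HL.
  - destruct l; simpl in Hlen; [|lia]. exists []. split; [|lra].
    repeat split; simpl; auto. constructor; [intros [] | constructor].
  - destruct (NoDup_dec Nat.eq_dec (s :: l)) as [ND|ND].
    + exists l. split; [|lra]. repeat split; auto. now rewrite last_cons_default.
    + destruct (not_NoDup dec_eq_nat ND) as [a [l1 [l2 [l3 E]]]].
      assert (exists X Y Z, l = X ++ Y ++ Z /\ Y <> [] /\ last Y (last X s) = last X s)
        as [X [Y [Z [-> [HY HXY]]]]].
      { destruct l1 as [|b l1'].
        - injection E as Ha Hl. subst a l. exists [], (l2 ++ [s]), l3.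
          rewrite <- app_assoc. repeat split; auto.
          + now destruct l2.
          + simpl. now rewrite last_app_default.
        - injection E as Hb Hl. subst b l. exists (l1' ++ [a]), (l2 ++ [a]), l3.
          rewrite <- !app_assoc. repeat split; auto.
          + now destruct l2.
          + now rewrite !last_app_default. }
      destruct (is_walk_cut_loop s X Y Z HW HXY) as [HW' [Hc' HL']].
      destruct (IH (X ++ Z)) as [l' [Hp Hcl]]; auto.
      * rewrite !length_app in *. destruct Y; [congruence|]. simpl in Hlen. lia.
      * now rewrite HL'.
      * exists l'. split; auto. lra.
Qed.


Section KilledChain.

Variable t : nat.

Definition alive (x : nat) : Prop := (x < n)%nat /\ x <> t /\ reachable n P x t.

Definition killed (i j : nat) : R := if excluded_middle_informative (alive j) then P i j else 0.

(* Probability that the walk from [x] stays alive for its first [k + 1] positions. *)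
Definition survival (x k : nat) : R :=
  if excluded_middle_informative (alive x) then sum_seqs n k (walk_weight killed x) else 0.

Lemma killed_ge0 i j : (i < n)%nat -> (j < n)%nat -> 0 <= killed i j.
Proof. intros. unfold killed. destruct excluded_middle_informative; [auto | lra]. Qed.

Lemma killed_mass_succ x k :
  sum_seqs n (S k) (walk_weight killed x) = sumR n (fun i => P x i * survival i k).
Proof.
  simpl. apply sumR_ext; intros i Hi. unfold survival, killed at 1.
  destruct excluded_middle_informative; simpl.
  - now rewrite <- sum_seqs_scal.
  - rewrite Rmult_0_r, <- (sum_seqs_const0 n k) at 1. apply sum_seqs_ext; intros; ring.
Qed.

Lemma killed_mass_bounds k x : (x < n)%nat ->
  0 <= sum_seqs n k (walk_weight killed x) <= 1.
Proof.
  revert x; induction k as [|k IH]; intros x Hx; [simpl; lra|].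
  assert (Hsurv : forall i, (i < n)%nat -> 0 <= survival i k <= 1).
  { intros i Hi. unfold survival. destruct excluded_middle_informative; [auto | lra]. }
  rewrite killed_mass_succ. split.
  - apply sumR_ge0; intros i Hi. apply Rmult_le_pos; [auto | apply Hsurv, Hi].
  - rewrite <- (P_row_sum x Hx). apply sumR_le; intros i Hi.
    pose proof (P_ge0 x i Hx Hi). pose proof (Hsurv i Hi). nra.
Qed.

Lemma survival_bounds x k : (x < n)%nat -> 0 <= survival x k <= 1.
Proof.
  intros Hx. unfold survival. destruct excluded_middle_informative; [|lra].
  now apply killed_mass_bounds.
Qed.

(* A walk [p] from [x] to [t] is a way of dying within [length p] steps. *)
Lemma survival_le_one_sub_walk p x : (x < n)%nat -> is_walk (edge n P) x p -> last p x = t ->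
  forall e, survival x (length p + e) <= 1 - walk_weight P x p.
Proof.
  revert x; induction p as [|y p IH]; intros x Hx HW HL e.
  - simpl in HL; subst x. unfold survival. destruct excluded_middle_informative as [[_ [Ht _]]|]; simpl.
    + congruence.
    + lra.
  - destruct HW as [[_ [Hy Hxy]] HW]. rewrite last_cons_default in HL.
    pose proof (IH y Hy HW HL e) as Hg.
    set (G := fun i => survival i (length p + e)).
    assert (HG : forall i, (i < n)%nat -> 0 <= G i <= 1) by (intros; now apply survival_bounds).
    assert (Hsum : sumR n (fun i => P x i * G i) <= 1 - P x y * walk_weight P y p).
    { assert (Hrest : P x y * (1 - G y) <= sumR n (fun i => P x i * (1 - G i))).
      { apply (sumR_term_le n (fun i => P x i * (1 - G i))); auto.
        intros i Hi. pose proof (P_ge0 x i Hx Hi). pose proof (HG i Hi). nra. }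
      assert (Hsplit : sumR n (fun i => P x i * G i) = 1 - sumR n (fun i => P x i * (1 - G i))).
      { rewrite <- (P_row_sum x Hx) at 1. rewrite <- sumR_sub. apply sumR_ext; intros; ring. }
      assert (P x y * walk_weight P y p <= P x y * (1 - G y)).
      { apply Rmult_le_compat_l; [apply P_ge0 | unfold G]; auto; lra. }
      lra. }
    cbn [length walk_weight]. replace (S (length p) + e)%nat with (S (length p + e)) by lia.
    unfold survival at 1. destruct excluded_middle_informative.
    + rewrite killed_mass_succ. exact Hsum.
    + pose proof (P_le1 x y Hx Hy). pose proof (is_walk_weight_pos y p HW).
      pose proof (walk_weight_le1 y p Hy (is_walk_in_nodes y p HW)). nra.
Qed.

Lemma survival_uniform_escape : exists D dl, 0 < dl /\
  forall x e, (x < n)%nat -> survival x (D + e)%nat <= 1 - dl.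
Proof.
  apply finite_uniform_eventual_bound. intros x Hx.
  destruct (excluded_middle_informative (alive x)) as [[_ [Hxt Hr]]|Hdead].
  - destruct (reachable_avoiding_walk x t Hr Hxt) as [l [_ Hw]].
    exists (length (l ++ [t])), (walk_weight P x (l ++ [t])). split.
    + now apply is_walk_weight_pos.
    + apply survival_le_one_sub_walk; auto. apply last_last.
  - exists O, 1. split; [lra|]. intros e. unfold survival.
    destruct excluded_middle_informative; [contradiction | lra].
Qed.

Lemma killed_weight_dead_end x l : ~ alive (last l x) -> l <> [] -> walk_weight killed x l = 0.
Proof.
  revert x; induction l as [|y l IH]; intros x Hd Hl; [congruence|].
  rewrite last_cons_default in Hd. cbn [walk_weight].
  destruct l as [|z l].
  - simpl in Hd |- *. unfold killed. destruct excluded_middle_informative; [contradiction | ring].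
  - rewrite IH; [ring | exact Hd | discriminate].
Qed.

Lemma killed_mass_geometric s : alive s -> exists rho K, 0 < rho < 1 /\ 0 <= K /\
  forall k, sum_seqs n k (walk_weight killed s) <= K * rho ^ k.
Proof.
  intros Halive_s. assert (Hs : (s < n)%nat) by apply Halive_s. destruct survival_uniform_escape as [D [dl [Hdl HD]]].
  set (A := fun k => sum_seqs n k (walk_weight killed s)).
  assert (HA : forall k, 0 <= A k <= 1) by (intros; now apply killed_mass_bounds).
  assert (Hdl1 : dl <= 1) by (pose proof (HD s O Hs); pose proof (survival_bounds s (D + 0) Hs); lra).
  (* after [S D] more steps every surviving walk has died with probability [>= dl] *)
  assert (Hcontr : forall k, A (k + S D)%nat <= (1 - dl / 2) * A k).
  { intros k. unfold A. rewrite sum_seqs_app.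
    assert (Hstep : forall l1, in_nodes n l1 ->
      sum_seqs n (S D) (fun l2 => walk_weight killed s (l1 ++ l2)) <= (1 - dl) * walk_weight killed s l1).
    { intros l1 Hl1.
      rewrite (sum_seqs_ext n _ _ (fun l2 => walk_weight killed s l1 * walk_weight killed (last l1 s) l2))
        by (intros; apply walk_weight_app).
      rewrite sum_seqs_scal.
      pose proof (walk_weight_ge0 n _ s l1 killed_ge0 Hs Hl1).
      pose proof (last_in_nodes n l1 s Hs Hl1) as Hlast.
      pose proof (HD (last l1 s) 1%nat Hlast) as Hsurv. unfold survival in Hsurv.
      replace (D + 1)%nat with (S D) in Hsurv by lia.
      destruct excluded_middle_informative as [Halive|Hdead]; [nra|].
      destruct l1 as [|x l1]; [contradiction|].
      rewrite killed_weight_dead_end by (auto || discriminate). lra. }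
    eapply Rle_trans; [apply sum_seqs_le; intros; apply Hstep; auto|].
    rewrite sum_seqs_scal. pose proof (HA k). unfold A in *. nra. }
  destruct (geometric_bound_of_contraction A (S D) (1 - dl / 2) ltac:(lia) ltac:(lra) HA Hcontr)
    as [rho [Hrho Hb]].
  exists rho, (/ (1 - dl / 2)). split; [exact Hrho | split].
  - left. apply Rinv_0_lt_compat. lra.
  - intros k. pose proof (Hb k) as Hk. unfold A, Rdiv in Hk. lra.
Qed.

Lemma absorbed_weight_le_killed x l : (t < n)%nat -> (x < n)%nat -> x <> t -> in_nodes n l ->
  (if avoids t x l then walk_weight P x (l ++ [t]) else 0) <= walk_weight killed x l.
Proof.
  intros Ht. revert x; induction l as [|y l IH]; intros x Hx Hxt Hl.
  - rewrite avoids_nil. destruct (Nat.eqb_spec t x); [congruence|]. simpl.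
    pose proof (P_le1 x t Hx Ht). lra.
  - inversion Hl; subst. rewrite avoids_cons.
    destruct (Nat.eqb_spec t x); [congruence|]. cbn [negb andb app walk_weight].
    pose proof (walk_weight_ge0 n killed y l killed_ge0 H1 H2).
    pose proof (P_ge0 x y Hx H1).
    unfold killed at 1. destruct excluded_middle_informative as [[_ [Hyt _]]|Hdead].
    + pose proof (IH y H1 Hyt H2). destruct (avoids t y l); nra.
    + destruct (avoids t y l) eqn:Ha; [|lra].
      destruct (Req_dec (walk_weight P y (l ++ [t])) 0) as [Z|Z]; [rewrite Z; lra|].
      exfalso. apply Hdead. split; [exact H1 | split].
      { intros ->. unfold avoids in Ha. simpl in Ha. now rewrite Nat.eqb_refl in Ha. }
      pose proof (is_walk_reachable y (l ++ [t])
        (walk_weight_neq0_is_walk y _ H1 (in_nodes_snoc n l t H2 Ht) Z)) as Hre.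
      now rewrite last_last in Hre.
Qed.

Lemma avoiding_weight_le_killed x l : (forall y, reachable n P x y -> reachable n P y t) ->
  (x < n)%nat -> in_nodes n l ->
  (if avoids t x l then walk_weight P x l else 0) <= walk_weight killed x l.
Proof.
  revert x; induction l as [|y l IH]; intros x Hreach Hx Hl.
  - simpl. destruct avoids; lra.
  - inversion Hl; subst. rewrite avoids_cons.
    pose proof (walk_weight_ge0 n killed x (y :: l) killed_ge0 Hx Hl) as Hk.
    destruct (Nat.eqb t x); cbn [negb andb]; [lra|].
    destruct (avoids t y l) eqn:Ha; [|lra]. cbn [walk_weight] in *.
    pose proof (walk_weight_ge0 n killed y l killed_ge0 H1 H2).
    destruct (P_ge0 x y Hx H1) as [Hxy|Hxy]; [|rewrite <- Hxy; lra].
    assert (Hsy : forall z, reachable n P y z -> reachable n P z t).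
    { intros z Hz. apply Hreach. apply rt_trans with y; [apply rt_step; repeat split; auto | exact Hz]. }
    assert (Hyt : y <> t).
    { intros ->. unfold avoids in Ha. simpl in Ha. now rewrite Nat.eqb_refl in Ha. }
    unfold killed at 1. destruct excluded_middle_informative as [_|Hdead].
    + pose proof (IH y Hsy H1 H2) as HI. rewrite Ha in HI. nra.
    + exfalso. apply Hdead. repeat split; auto. apply Hsy, rt_refl.
Qed.

End KilledChain.

Section Absorption.

Variables s t : nat.

Hypothesis s_lt : (s < n)%nat.
Hypothesis t_lt : (t < n)%nat.
Hypothesis s_neq_t : s <> t.
Hypothesis s_reaches_t : reachable n P s t.

Lemma source_alive : alive t s.
Proof. repeat split; auto. Qed.

Definition absorbed_weight (l : list nat) : R :=
  if avoids t s l then walk_weight P s (l ++ [t]) else 0.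

Definition absorbed_cost (l : list nat) : R := walk_cost w s (l ++ [t]).

Definition absorbed_sum (h : R -> R) (k : nat) : R :=
  sum_seqs n k (fun l => absorbed_weight l * h (absorbed_cost l)).

Lemma Q_term_eq a k : Q_term n P w s t a k = absorbed_sum (Rpower a) k.
Proof.
  apply sum_seqs_ext; intros l _. unfold absorbed_weight, absorbed_cost.
  destruct avoids; [apply walk_weight_Pev | ring].
Qed.

Lemma C_term_eq a k : C_term n P w s t a k = absorbed_sum (fun c => Rpower a c * c) k.
Proof.
  apply sum_seqs_ext; intros l _. unfold absorbed_weight, absorbed_cost.
  destruct avoids; [rewrite walk_weight_Pev; ring | ring].
Qed.

Lemma absorbed_weight_ge0 l : in_nodes n l -> 0 <= absorbed_weight l.
Proof.
  intros Hl. unfold absorbed_weight. destruct avoids; [|lra].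
  apply (walk_weight_ge0 n); auto. now apply in_nodes_snoc.
Qed.

Lemma absorbed_weight_neq0 l : in_nodes n l -> absorbed_weight l <> 0 ->
  avoids t s l = true /\ is_walk (edge n P) s (l ++ [t]).
Proof.
  intros Hl HF. unfold absorbed_weight in HF. destruct (avoids t s l); [|lra].
  split; auto. apply walk_weight_neq0_is_walk; auto. now apply in_nodes_snoc.
Qed.

Lemma absorbed_cost_ge0 l : in_nodes n l -> absorbed_weight l <> 0 -> 0 <= absorbed_cost l.
Proof. intros Hl HF. apply walk_cost_ge0, (absorbed_weight_neq0 l Hl HF). Qed.

Lemma absorbed_sum_le h1 h2 k :
  (forall l, in_nodes n l -> absorbed_weight l <> 0 -> h1 (absorbed_cost l) <= h2 (absorbed_cost l)) ->
  absorbed_sum h1 k <= absorbed_sum h2 k.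
Proof.
  intros Hh. apply sum_seqs_le; intros l Hl _. pose proof (absorbed_weight_ge0 l Hl).
  destruct (Req_dec (absorbed_weight l) 0) as [Z|Z]; [rewrite Z; lra|].
  apply Rmult_le_compat_l; auto.
Qed.

Lemma absorbed_sum_le_on_ge0 h1 h2 k : (forall c, 0 <= c -> h1 c <= h2 c) ->
  absorbed_sum h1 k <= absorbed_sum h2 k.
Proof. intros Hh. apply absorbed_sum_le; intros. now apply Hh, absorbed_cost_ge0. Qed.

Lemma absorbed_sum_lin h1 h2 al be k :
  absorbed_sum (fun c => al * h1 c + be * h2 c) k = al * absorbed_sum h1 k + be * absorbed_sum h2 k.
Proof. unfold absorbed_sum. rewrite <- !sum_seqs_scal, <- sum_seqs_add. apply sum_seqs_ext; intros; ring. Qed.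

Lemma absorbed_sum_const0 k : absorbed_sum (fun _ => 0) k = 0.
Proof.
  unfold absorbed_sum. rewrite (sum_seqs_ext n k _ (fun _ => 0)) by (intros; ring).
  apply sum_seqs_const0.
Qed.

Definition admissible (h : R -> R) : Prop := forall c, 0 <= c -> 0 <= h c <= 1 + c.

Lemma admissible_Rpower a : 0 < a <= 1 -> admissible (Rpower a).
Proof. intros Ha c Hc. pose proof (Rpower_pos a c). pose proof (Rpower_le1 a c Ha Hc). lra. Qed.

Lemma admissible_Rpower_mul a : 0 < a <= 1 -> admissible (fun c => Rpower a c * c).
Proof. intros Ha c Hc. pose proof (Rpower_pos a c). pose proof (Rpower_le1 a c Ha Hc). split; nra. Qed.

Definition domination (k : nat) : R :=
  sum_seqs n k (walk_weight (killed t) s) * (1 + INR (S k) * cost_bound).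

Lemma domination_series_cv : exists l, Un_cv (fun N => sum_f_R0 domination N) l.
Proof.
  destruct (killed_mass_geometric t s source_alive) as [rho [K [Hrho [HK Hd]]]].
  pose proof cost_bound_ge0 as Hcb.
  set (C := K * (1 + cost_bound)).
  assert (HC : 0 <= C) by (unfold C; nra).
  assert (Hle : forall k, 0 <= domination k <= C * (INR (S k) * rho ^ k)).
  { intros k. unfold domination, C.
    pose proof (sum_seqs_ge0 n k (walk_weight (killed t) s)
      (fun l Hl => walk_weight_ge0 n _ s l (killed_ge0 t) s_lt Hl)).
    pose proof (Hd k). pose proof (pow_lt rho k (proj1 Hrho)). pose proof (pos_INR k).
    rewrite S_INR. assert (0 <= (INR k + 1) * cost_bound) by nra. split; [nra|].
    assert (1 + (INR k + 1) * cost_bound <= (1 + cost_bound) * (INR k + 1)) by nra.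
    apply Rle_trans with ((K * rho ^ k) * ((1 + cost_bound) * (INR k + 1))); [|nra].
    apply Rmult_le_compat; nra. }
  apply series_cv_of_le with (fun k => C * (INR (S k) * rho ^ k)); auto.
  apply series_cv_of_bounded with (C * / (1 - rho) ^ 2).
  - intros k. pose proof (Hle k). lra.
  - intros N. rewrite sum_f_R0_sumR, sumR_scal, <- sum_f_R0_sumR.
    apply Rmult_le_compat_l; auto. now apply sum_succ_mul_pow_le.
Qed.

Lemma absorbed_sum_le_domination h k : admissible h -> 0 <= absorbed_sum h k <= domination k.
Proof.
  intros Hh. split.
  - rewrite <- (absorbed_sum_const0 k). apply absorbed_sum_le; intros l Hl HF.
    apply Hh, absorbed_cost_ge0; auto.
  - unfold absorbed_sum, domination. rewrite <- sum_seqs_scal_r. apply sum_seqs_le; intros l Hl Hlen.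
    pose proof (absorbed_weight_ge0 l Hl) as HF0.
    pose proof (absorbed_weight_le_killed t s l t_lt s_lt s_neq_t Hl) as HFk.
    fold (absorbed_weight l) in HFk.
    pose proof cost_bound_ge0. pose proof (pos_INR (S k)).
    destruct (Req_dec (absorbed_weight l) 0) as [Z|Z].
    { rewrite Z, Rmult_0_l. apply Rmult_le_pos; nra. }
    pose proof (Hh _ (absorbed_cost_ge0 l Hl Z)).
    pose proof (Rabs_walk_cost_le s (l ++ [t]) s_lt (in_nodes_snoc n l t Hl t_lt)) as Hc.
    rewrite length_app, Nat.add_1_r, Hlen in Hc. fold (absorbed_cost l) in Hc.
    pose proof (Rle_abs (absorbed_cost l)).
    apply Rmult_le_compat; lra.
Qed.

Lemma absorbed_series_cv h : admissible h ->
  exists l, Un_cv (fun N => sum_f_R0 (absorbed_sum h) N) l.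
Proof.
  intros Hh. apply series_cv_of_le with domination; [|apply domination_series_cv].
  intros k. now apply absorbed_sum_le_domination.
Qed.

Lemma Qabs_cv a : 0 < a <= 1 -> Un_cv (fun N => sum_f_R0 (absorbed_sum (Rpower a)) N) (Qabs n P w s t a).
Proof.
  intros Ha. destruct (absorbed_series_cv _ (admissible_Rpower a Ha)) as [l Hl].
  unfold Qabs. rewrite (series_val_eq _ l); auto.
  apply (Un_cv_ext _ _ (fun N => sum_eq _ _ N (fun k _ => eq_sym (Q_term_eq a k))) _ Hl).
Qed.

Lemma Cnum_cv a : 0 < a <= 1 ->
  Un_cv (fun N => sum_f_R0 (absorbed_sum (fun c => Rpower a c * c)) N) (series_val (C_term n P w s t a)).
Proof.
  intros Ha. destruct (absorbed_series_cv _ (admissible_Rpower_mul a Ha)) as [l Hl].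
  rewrite (series_val_eq _ l); auto.
  apply (Un_cv_ext _ _ (fun N => sum_eq _ _ N (fun k _ => eq_sym (C_term_eq a k))) _ Hl).
Qed.

Lemma absorbed_walk_exists : exists l0, in_nodes n l0 /\ 0 < absorbed_weight l0.
Proof.
  destruct (reachable_avoiding_walk s t s_reaches_t s_neq_t) as [l0 [Ha Hw]].
  exists l0. split.
  - apply is_walk_in_nodes, in_nodes_app in Hw. tauto.
  - unfold absorbed_weight. rewrite Ha. now apply is_walk_weight_pos.
Qed.

Lemma absorbed_term_le_Qabs a l0 : 0 < a <= 1 -> in_nodes n l0 ->
  absorbed_weight l0 * Rpower a (absorbed_cost l0) <= Qabs n P w s t a.
Proof.
  intros Ha Hl0.
  assert (Hnn : forall k, 0 <= absorbed_sum (Rpower a) k)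
    by (intros; now apply absorbed_sum_le_domination, admissible_Rpower).
  apply Rle_trans with (absorbed_sum (Rpower a) (length l0)).
  - apply (sum_seqs_term_le n _ (fun l => absorbed_weight l * Rpower a (absorbed_cost l))); auto.
    intros l Hl. apply Rmult_le_pos; [now apply absorbed_weight_ge0 | left; apply Rpower_pos].
  - apply Rle_trans with (sum_f_R0 (absorbed_sum (Rpower a)) (length l0)).
    + now apply term_le_partial_sum.
    + apply sum_incr; [apply Qabs_cv|]; auto.
Qed.

Lemma Qabs_pos a : 0 < a <= 1 -> 0 < Qabs n P w s t a.
Proof.
  intros Ha. destruct absorbed_walk_exists as [l0 [Hl0 HF]].
  pose proof (absorbed_term_le_Qabs a l0 Ha Hl0). pose proof (Rpower_pos a (absorbed_cost l0)). nra.
Qed.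

Lemma absorbed_sum_rearrangement a1 a2 k k' : 0 < a1 -> a1 < a2 ->
  absorbed_sum (fun c => Rpower a1 c * c) k * absorbed_sum (Rpower a2) k'
  - absorbed_sum (fun c => Rpower a2 c * c) k * absorbed_sum (Rpower a1) k'
  + (absorbed_sum (fun c => Rpower a1 c * c) k' * absorbed_sum (Rpower a2) k
  - absorbed_sum (fun c => Rpower a2 c * c) k' * absorbed_sum (Rpower a1) k) <= 0.
Proof.
  intros H1 H2.
  set (F := absorbed_weight). set (c := absorbed_cost).
  set (g := fun l l' => F l * F l' *
    (c l * Rpower a1 (c l) * Rpower a2 (c l') - c l * Rpower a2 (c l) * Rpower a1 (c l'))).
  assert (Hprod : forall k k',
    absorbed_sum (fun c => Rpower a1 c * c) k * absorbed_sum (Rpower a2) k'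
    - absorbed_sum (fun c => Rpower a2 c * c) k * absorbed_sum (Rpower a1) k'
    = sum_seqs n k (fun l => sum_seqs n k' (fun l' => g l l'))).
  { intros j j'. unfold absorbed_sum. rewrite !sum_seqs_mul, <- sum_seqs_sub.
    apply sum_seqs_ext; intros. rewrite <- sum_seqs_sub. apply sum_seqs_ext; intros.
    unfold g, F, c. ring. }
  rewrite (Hprod k k'), (Hprod k' k), (sum_seqs_comm n k' k), <- sum_seqs_add.
  apply Rle_trans with (sum_seqs n k (fun _ => 0)); [|rewrite sum_seqs_const0; lra].
  apply sum_seqs_le; intros l Hl _. rewrite <- sum_seqs_add.
  apply Rle_trans with (sum_seqs n k' (fun _ => 0)); [|rewrite sum_seqs_const0; lra].
  apply sum_seqs_le; intros l' Hl' _. unfold g.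
  pose proof (absorbed_weight_ge0 l Hl). pose proof (absorbed_weight_ge0 l' Hl').
  pose proof (Rpower_rearrangement a1 a2 (c l) (c l') H1 H2).
  assert (0 <= F l * F l') by (apply Rmult_le_pos; auto).
  match goal with |- ?e <= 0 => replace e with
    ((F l * F l') * ((c l - c l') * (Rpower a1 (c l) * Rpower a2 (c l') - Rpower a2 (c l) * Rpower a1 (c l'))))
    by ring end.
  nra.
Qed.

Lemma partial_sums_rearrangement a1 a2 N : 0 < a1 -> a1 < a2 ->
  sum_f_R0 (absorbed_sum (fun c => Rpower a1 c * c)) N * sum_f_R0 (absorbed_sum (Rpower a2)) N <=
  sum_f_R0 (absorbed_sum (fun c => Rpower a2 c * c)) N * sum_f_R0 (absorbed_sum (Rpower a1)) N.
Proof.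
  intros H1 H2. rewrite !sum_f_R0_sumR, !sumR_mul.
  enough (sumR (S N) (fun k => sumR (S N) (fun k' =>
    absorbed_sum (fun c => Rpower a1 c * c) k * absorbed_sum (Rpower a2) k'
    - absorbed_sum (fun c => Rpower a2 c * c) k * absorbed_sum (Rpower a1) k')) <= 0) as H.
  { rewrite (sumR_ext _ _ (fun k => sumR (S N) (fun k' => _) - sumR (S N) (fun k' => _))) in H
      by (intros; apply sumR_sub).
    rewrite sumR_sub in H. lra. }
  apply sumR_double_le0_of_antisym. intros k k' _ _. now apply absorbed_sum_rearrangement.
Qed.

Lemma Uavoid_monotone a1 a2 : 0 < a1 -> a1 < a2 -> a2 <= 1 ->
  Uavoid n P w s t a1 <= Uavoid n P w s t a2.
Proof.
  intros H1 H12 H2.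
  pose proof (Qabs_pos a1 ltac:(lra)). pose proof (Qabs_pos a2 ltac:(lra)).
  assert (Hcross : series_val (C_term n P w s t a1) * Qabs n P w s t a2 <=
                   series_val (C_term n P w s t a2) * Qabs n P w s t a1).
  { eapply Rle_cv_lim; [intros N; apply (partial_sums_rearrangement a1 a2 N H1 H12)| |];
      apply CV_mult; (apply Cnum_cv || apply Qabs_cv); lra. }
  unfold Uavoid. apply (Rmult_le_reg_r (Qabs n P w s t a1 * Qabs n P w s t a2)); [nra|].
  unfold Rdiv.
  replace (series_val (C_term n P w s t a1) * / Qabs n P w s t a1 * (Qabs n P w s t a1 * Qabs n P w s t a2))
    with (series_val (C_term n P w s t a1) * Qabs n P w s t a2) by (field; lra).
  replace (series_val (C_term n P w s t a2) * / Qabs n P w s t a2 * (Qabs n P w s t a1 * Qabs n P w s t a2))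
    with (series_val (C_term n P w s t a2) * Qabs n P w s t a1) by (field; lra).
  exact Hcross.
Qed.

Lemma absorbed_sum_ext h1 h2 k : (forall c, h1 c = h2 c) -> absorbed_sum h1 k = absorbed_sum h2 k.
Proof. intros E. apply sum_seqs_ext; intros. now rewrite E. Qed.

Lemma absorbed_partial_sums_gap h1 h2 g d N : (forall c, 0 <= c -> h1 c - h2 c <= d * g c) ->
  sum_f_R0 (absorbed_sum h1) N - sum_f_R0 (absorbed_sum h2) N <= d * sum_f_R0 (absorbed_sum g) N.
Proof.
  intros Hg. rewrite !sum_f_R0_sumR, <- sumR_sub, <- sumR_scal. apply sumR_le; intros k _.
  replace (absorbed_sum h1 k - absorbed_sum h2 k)
    with (absorbed_sum (fun c => 1 * h1 c + (-1) * h2 c) k) by (rewrite absorbed_sum_lin; ring).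
  replace (d * absorbed_sum g k)
    with (absorbed_sum (fun c => d * g c + 0 * g c) k) by (rewrite absorbed_sum_lin; ring).
  apply absorbed_sum_le_on_ge0. intros c Hc. specialize (Hg c Hc). lra.
Qed.

Lemma Qabs_left_cont_at_1 :
  limit1_in (Qabs n P w s t) (fun a => 0 < a < 1) (Qabs n P w s t 1) 1.
Proof.
  apply series_left_cont_at_1 with (u := fun a => absorbed_sum (Rpower a))
    (K := sum_f_R0 (absorbed_sum (fun c => c))); [| exact Qabs_cv |].
  - intros a k Ha. split; [apply absorbed_sum_le_domination, admissible_Rpower; lra|].
    apply absorbed_sum_le_on_ge0. intros c Hc. rewrite Rpower_1_base. apply Rpower_le1; lra.
  - intros N a Ha. apply absorbed_partial_sums_gap. intros c Hc.
    rewrite Rpower_1_base. apply one_sub_Rpower_le; lra.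
Qed.

Lemma Cnum_left_cont_at_1 : limit1_in (fun a => series_val (C_term n P w s t a))
  (fun a => 0 < a < 1) (series_val (C_term n P w s t 1)) 1.
Proof.
  apply series_left_cont_at_1 with (u := fun a => absorbed_sum (fun c => Rpower a c * c))
    (K := sum_f_R0 (absorbed_sum (fun c => c * c))); [| exact Cnum_cv |].
  - intros a k Ha. split; [apply absorbed_sum_le_domination, admissible_Rpower_mul; lra|].
    apply absorbed_sum_le_on_ge0. intros c Hc. rewrite Rpower_1_base.
    pose proof (Rpower_le1 a c ltac:(lra) Hc). nra.
  - intros N a Ha. apply absorbed_partial_sums_gap. intros c Hc.
    rewrite Rpower_1_base. pose proof (one_sub_Rpower_le a c ltac:(lra) Hc). nra.
Qed.

Lemma Uavoid_left_cont_at_1 :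
  limit1_in (Uavoid n P w s t) (fun a => 0 < a < 1) (Uavoid n P w s t 1) 1.
Proof.
  apply limit_mul; [exact Cnum_left_cont_at_1|].
  apply limit_inv; [exact Qabs_left_cont_at_1|].
  pose proof (Qabs_pos 1 ltac:(lra)). lra.
Qed.

Definition avoiding_mass (k : nat) : R :=
  sum_seqs n k (fun l => if avoids t s l then walk_weight P s l else 0).

Definition avoiding_cost (k : nat) : R :=
  sum_seqs n k (fun l => if avoids t s l then walk_weight P s l * walk_cost w s l else 0).

Lemma avoiding_mass_0 : avoiding_mass 0 = 1.
Proof. unfold avoiding_mass; simpl. rewrite avoids_nil. destruct (Nat.eqb_spec t s); [congruence | reflexivity]. Qed.

Lemma avoiding_cost_0 : avoiding_cost 0 = 0.
Proof. unfold avoiding_cost; simpl. rewrite avoids_nil. destruct (Nat.eqb_spec t s); simpl; ring. Qed.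

Lemma avoiding_step_split (f : list nat -> R) l :
  sumR n (fun j => if avoids t s (l ++ [j]) then f (l ++ [j]) else 0) +
  (if avoids t s l then f (l ++ [t]) else 0) =
  if avoids t s l then sumR n (fun j => f (l ++ [j])) else 0.
Proof.
  rewrite (sumR_ext n _ (fun j => if avoids t s l then (if Nat.eqb t j then 0 else f (l ++ [j])) else 0))
    by (intros j _; rewrite avoids_snoc; now destruct (avoids t s l), (Nat.eqb t j)).
  destruct (avoids t s l).
  - now rewrite (sumR_split_at n (fun j => f (l ++ [j])) t t_lt).
  - rewrite sumR_const0. ring.
Qed.

Lemma walk_weight_snoc_sum l : in_nodes n l ->
  sumR n (fun j => walk_weight P s (l ++ [j])) = walk_weight P s l.
Proof.
  intros Hl. rewrite (sumR_ext n _ (fun j => walk_weight P s l * P (last l s) j))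
    by (intros; rewrite walk_weight_app; simpl; ring).
  rewrite sumR_scal, P_row_sum by (now apply last_in_nodes). ring.
Qed.

Lemma avoiding_mass_balance k :
  avoiding_mass (S k) + absorbed_sum (fun _ => 1) k = avoiding_mass k.
Proof.
  unfold avoiding_mass, absorbed_sum. rewrite sum_seqs_snoc, <- sum_seqs_add.
  apply sum_seqs_ext; intros l Hl. unfold absorbed_weight. rewrite Rmult_1_r.
  rewrite (avoiding_step_split (walk_weight P s)). now rewrite walk_weight_snoc_sum.
Qed.

Lemma avoiding_cost_balance k :
  avoiding_cost (S k) + absorbed_sum (fun c => c) k = avoiding_cost k + H_term n P w s t k.
Proof.
  unfold avoiding_cost, absorbed_sum, H_term. rewrite sum_seqs_snoc, <- !sum_seqs_add.
  apply sum_seqs_ext; intros l Hl. unfold absorbed_weight, absorbed_cost.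
  replace ((if avoids t s l then walk_weight P s (l ++ [t]) else 0) * walk_cost w s (l ++ [t]))
    with (if avoids t s l then walk_weight P s (l ++ [t]) * walk_cost w s (l ++ [t]) else 0)
    by (destruct avoids; ring).
  rewrite (avoiding_step_split (fun l' => walk_weight P s l' * walk_cost w s l')).
  destruct (avoids t s l); [|ring]. rewrite last_cons_default.
  rewrite (sumR_ext n _ (fun j => walk_weight P s (l ++ [j]) * walk_cost w s l +
                                  walk_weight P s (l ++ [j]) * w (last l s) j))
    by (intros; rewrite walk_cost_app; simpl; ring).
  rewrite sumR_add, (sumR_ext n _ (fun j => walk_cost w s l * walk_weight P s (l ++ [j])))
    by (intros; ring).
  rewrite sumR_scal, walk_weight_snoc_sum by exact Hl. ring.
Qed.

Section TargetAlwaysReachable.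

Hypothesis t_always_reachable : forall x, reachable n P s x -> reachable n P x t.

Lemma avoiding_le_domination k :
  0 <= avoiding_mass k <= domination k /\ 0 <= avoiding_cost k <= domination k.
Proof.
  pose proof cost_bound_ge0. pose proof (pos_INR (S k)).
  assert (Hkil : forall l, in_nodes n l ->
    (if avoids t s l then walk_weight P s l else 0) <= walk_weight (killed t) s l)
    by (intros; now apply avoiding_weight_le_killed).
  assert (Hnn : forall l, in_nodes n l -> 0 <= walk_weight (killed t) s l)
    by (intros; apply (walk_weight_ge0 n); auto; apply killed_ge0).
  assert (0 <= INR (S k) * cost_bound) by nra.
  unfold avoiding_mass, avoiding_cost, domination. rewrite <- sum_seqs_scal_r.
  repeat split.
  - apply sum_seqs_ge0; intros l Hl. destruct avoids; [apply (walk_weight_ge0 n) | lra]; auto.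
  - apply sum_seqs_le; intros l Hl _. pose proof (Hkil l Hl). pose proof (Hnn l Hl). nra.
  - apply sum_seqs_ge0; intros l Hl. destruct avoids; [apply walk_weight_mul_cost_ge0 | lra]; auto.
  - apply sum_seqs_le; intros l Hl Hlen. pose proof (Hkil l Hl). pose proof (Hnn l Hl).
    destruct (avoids t s l); [|nra].
    pose proof (Rabs_walk_cost_le s l s_lt Hl) as Hc. rewrite Hlen in Hc.
    pose proof (Rle_abs (walk_cost w s l)). pose proof (walk_weight_ge0 n P s l P_ge0 s_lt Hl).
    rewrite S_INR in *. pose proof (pos_INR k).
    apply Rle_trans with (walk_weight P s l * (INR k * cost_bound)); [apply Rmult_le_compat_l; lra|].
    apply Rmult_le_compat; nra.
Qed.

Lemma avoiding_cv0 : Un_cv avoiding_mass 0 /\ Un_cv avoiding_cost 0.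
Proof.
  destruct domination_series_cv as [l Hl]. pose proof (series_terms_cv0 _ _ Hl) as H0.
  split; apply (Un_cv_squeeze0 _ domination); auto; intros N; apply avoiding_le_domination.
Qed.

Lemma Qabs_at_1 : Qabs n P w s t 1 = 1.
Proof.
  eapply UL_sequence; [apply Qabs_cv; lra|].
  apply (Un_cv_ext (fun N => 1 - avoiding_mass (S N))).
  - intros N. rewrite (telescope avoiding_mass _ (fun _ => 0)).
    + rewrite avoiding_mass_0, sum_f_R0_sumR, sumR_const0. ring.
    + intros k. rewrite (absorbed_sum_ext _ (fun _ => 1)) by apply Rpower_1_base.
      rewrite avoiding_mass_balance. ring.
  - pose proof (CV_minus _ _ _ _ (Un_cv_const 1) (Un_cv_succ _ _ (proj1 avoiding_cv0))) as Hcv.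
    now rewrite Rminus_0_r in Hcv.
Qed.

Lemma Cnum_at_1 : series_val (C_term n P w s t 1) = hitting_cost n P w s t.
Proof.
  symmetry. apply series_val_eq.
  apply (Un_cv_ext (fun N => sum_f_R0 (absorbed_sum (fun c => Rpower 1 c * c)) N + avoiding_cost (S N))).
  - intros N. rewrite (telescope avoiding_cost _ (H_term n P w s t)).
    + rewrite avoiding_cost_0. ring.
    + intros k. rewrite (absorbed_sum_ext _ (fun c => c)) by (intros; rewrite Rpower_1_base; ring).
      apply avoiding_cost_balance.
  - pose proof (CV_plus _ _ _ _ (Cnum_cv 1 ltac:(lra)) (Un_cv_succ _ _ (proj2 avoiding_cv0))) as Hcv.
    now rewrite Rplus_0_r in Hcv.
Qed.

Lemma Uavoid_at_1 : Uavoid n P w s t 1 = hitting_cost n P w s t.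
Proof. unfold Uavoid. rewrite Qabs_at_1, Cnum_at_1. field. Qed.

End TargetAlwaysReachable.

Section ShortestPath.

Variable L : R.
Hypothesis L_shortest : shortest_cost n P w s t L.

Lemma shortest_le_absorbed_cost l : in_nodes n l -> absorbed_weight l <> 0 -> L <= absorbed_cost l.
Proof.
  intros Hl HF. destruct (absorbed_weight_neq0 l Hl HF) as [_ Hw].
  destruct (walk_to_path s t (l ++ [t]) Hw (last_last _ _ _)) as [l' [Hp Hc]].
  pose proof (proj2 L_shortest l' Hp). unfold absorbed_cost. lra.
Qed.

Lemma shortest_absorbed_walk : exists l0, in_nodes n l0 /\ 0 < absorbed_weight l0 /\
  absorbed_cost l0 = L /\ 0 <= L.
Proof.
  destruct L_shortest as [[l [[Hw [Hl Hnd]] Hc]] _].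
  destruct l as [|x l']; [simpl in Hl; congruence|].
  destruct (exists_last (l := x :: l') ltac:(discriminate)) as [l0 [a E]]. rewrite E in *.
  rewrite last_cons_default, last_app_default in Hl. simpl in Hl. subst a.
  exists l0. pose proof (is_walk_in_nodes s _ Hw) as Hin. apply in_nodes_app in Hin.
  repeat split; [tauto | | auto | rewrite <- Hc; now apply walk_cost_ge0].
  assert (Havoid : avoids t s l0 = true).
  { unfold avoids. apply negb_true_iff. destruct (existsb (Nat.eqb t) (s :: l0)) eqn:Ex; auto.
    apply existsb_exists in Ex as [y [Hy Ey]]. apply Nat.eqb_eq in Ey. subst y.
    change (s :: l0 ++ [t]) with ((s :: l0) ++ t :: []) in Hnd. apply NoDup_remove_2 in Hnd.
    now rewrite app_nil_r in Hnd. }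
  unfold absorbed_weight. rewrite Havoid. now apply is_walk_weight_pos.
Qed.

Lemma Cnum_sub_Qabs_ge0 a : 0 < a <= 1 -> 0 <= series_val (C_term n P w s t a) - L * Qabs n P w s t a.
Proof.
  intros Ha. replace (series_val (C_term n P w s t a) - L * Qabs n P w s t a)
    with (1 * series_val (C_term n P w s t a) + (- L) * Qabs n P w s t a) by ring.
  eapply Rle_cv_lim; [|apply Un_cv_const | apply Un_cv_lin; [apply Cnum_cv | apply Qabs_cv]; auto].
  intros N. cbv beta. rewrite <- sum_f_R0_lin. apply cond_pos_sum. intros k.
  rewrite <- absorbed_sum_lin, <- (absorbed_sum_const0 k). apply absorbed_sum_le.
  intros l Hl HF. pose proof (shortest_le_absorbed_cost l Hl HF). pose proof (Rpower_pos a (absorbed_cost l)).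
  nra.
Qed.

(* Writing [a^c = a^L a^(c - L)], the excess cost [c - L] is at most [eps] or damped by [a^eps]. *)
Lemma Cnum_sub_Qabs_le a eps : 0 < a < 1 -> 0 < eps ->
  series_val (C_term n P w s t a) - L * Qabs n P w s t a <=
  Rpower a L * (eps * Qabs n P w s t 1 +
                Rpower a eps * (series_val (C_term n P w s t 1) - L * Qabs n P w s t 1)).
Proof.
  intros Ha He.
  set (al := Rpower a L * (eps - Rpower a eps * L)). set (be := Rpower a L * Rpower a eps).
  replace (series_val (C_term n P w s t a) - L * Qabs n P w s t a)
    with (1 * series_val (C_term n P w s t a) + (- L) * Qabs n P w s t a) by ring.
  replace (Rpower a L * (eps * Qabs n P w s t 1 +
             Rpower a eps * (series_val (C_term n P w s t 1) - L * Qabs n P w s t 1)))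
    with (al * Qabs n P w s t 1 + be * series_val (C_term n P w s t 1)) by (unfold al, be; ring).
  eapply Rle_cv_lim; [| apply Un_cv_lin; [apply Cnum_cv | apply Qabs_cv]; lra
                      | apply Un_cv_lin; [apply Qabs_cv | apply Cnum_cv]; lra].
  intros N. cbv beta. rewrite <- !sum_f_R0_lin. apply sum_Rle. intros k _.
  rewrite <- !absorbed_sum_lin. apply absorbed_sum_le. intros l Hl HF.
  set (c := absorbed_cost l). pose proof (shortest_le_absorbed_cost l Hl HF) as HLc. fold c in HLc.
  rewrite !Rpower_1_base.
  replace (Rpower a c) with (Rpower a L * Rpower a (c - L)) by (rewrite <- Rpower_plus; f_equal; ring).
  pose proof (Rpower_mul_le a (c - L) eps Ha ltac:(lra) He).
  pose proof (Rpower_pos a L).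
  assert (Rpower a L * (Rpower a (c - L) * (c - L)) <= Rpower a L * (eps + Rpower a eps * (c - L)))
    by (apply Rmult_le_compat_l; lra).
  unfold al, be. nra.
Qed.

Lemma Uavoid_limit_at_0 : limit1_in (Uavoid n P w s t) (fun a => 0 < a < 1) L 0.
Proof.
  destruct shortest_absorbed_walk as [l0 [Hl0 [HF0 [Hc0 HL0]]]].
  set (m0 := absorbed_weight l0).
  set (K := series_val (C_term n P w s t 1) - L * Qabs n P w s t 1).
  apply (limit_at_0_of_Rpower_bound _ L (Qabs n P w s t 1) K m0); auto.
  - left. apply Qabs_pos. lra.
  - apply Cnum_sub_Qabs_ge0. lra.
  - intros a eps Ha He.
    pose proof (Qabs_pos a ltac:(lra)) as HQ.
    pose proof (absorbed_term_le_Qabs a l0 ltac:(lra) Hl0) as HQm. rewrite Hc0 in HQm. fold m0 in HQm.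
    pose proof (Cnum_sub_Qabs_ge0 a ltac:(lra)) as D0.
    pose proof (Cnum_sub_Qabs_le a eps Ha He) as D1. fold K in D1.
    pose proof (Qabs_pos 1 ltac:(lra)). pose proof (Cnum_sub_Qabs_ge0 1 ltac:(lra)). fold K in H0.
    pose proof (Rpower_pos a L). pose proof (Rpower_pos a eps).
    set (D := series_val (C_term n P w s t a) - L * Qabs n P w s t a) in *.
    set (R' := eps * Qabs n P w s t 1 + Rpower a eps * K) in *.
    assert (0 <= R') by (unfold R'; nra).
    assert (HU : Uavoid n P w s t a - L = D / Qabs n P w s t a) by (unfold Uavoid, D; field; lra).
    assert (Hm0 : 0 < m0) by exact HF0.
    rewrite HU. unfold Rdiv. split; [apply Rmult_le_pos; [lra | left; apply Rinv_0_lt_compat; lra]|].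
    apply (Rmult_le_reg_r (Qabs n P w s t a * m0)); [nra|].
    replace (D * / Qabs n P w s t a * (Qabs n P w s t a * m0)) with (D * m0) by (field; lra).
    replace (R' * / m0 * (Qabs n P w s t a * m0)) with (R' * Qabs n P w s t a) by (field; lra).
    assert (D * m0 <= Rpower a L * R' * m0) by (apply Rmult_le_compat_r; lra).
    assert (R' * (m0 * Rpower a L) <= R' * Qabs n P w s t a) by (apply Rmult_le_compat_l; auto).
    lra.
Qed.

End ShortestPath.

End Absorption.


End Network.

Theorem mainTheorem2 (n : nat) (P w : nat -> nat -> R) (s t : nat)
  (HPnn : forall i j, (i < n)%nat -> (j < n)%nat -> 0 <= P i j)
  (HProw : forall i, (i < n)%nat -> sumR n (fun j => P i j) = 1)
  (Hw : forall i j, (i < n)%nat -> (j < n)%nat -> 0 < P i j -> 0 < w i j)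
  (Hs : (s < n)%nat) (Ht : (t < n)%nat) (Hst : s <> t)
  (Hpath : reachable n P s t) :
  (* (a) *)
  (forall L, shortest_cost n P w s t L ->
     limit1_in (Uavoid n P w s t) (fun a => 0 < a < 1) L 0)
  /\
  (* (b) *)
  ((forall x, reachable n P s x -> reachable n P x t) ->
     Uavoid n P w s t 1 = hitting_cost n P w s t /\
     limit1_in (Uavoid n P w s t) (fun a => 0 < a < 1) (hitting_cost n P w s t) 1)
  /\
  (* (c) *)
  (forall a1 a2, 0 < a1 -> a1 < a2 -> a2 <= 1 ->
     Uavoid n P w s t a1 <= Uavoid n P w s t a2).
Proof.
  split; [|split].
  - exact (Uavoid_limit_at_0 n P w HPnn HProw Hw s t Hs Ht Hst Hpath).
  - intros Hreach.
    pose proof (Uavoid_at_1 n P w HPnn HProw Hw s t Hs Ht Hst Hpath Hreach) as Hat1.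
    split; [exact Hat1|]. rewrite <- Hat1.
    exact (Uavoid_left_cont_at_1 n P w HPnn HProw Hw s t Hs Ht Hst Hpath).
  - exact (Uavoid_monotone n P w HPnn HProw Hw s t Hs Ht Hst Hpath).
Qed.
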